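(* Let $0<\epsilon\le0.01$, $\Delta\ge0$, and let $\mathbb{D}_1,\mathbb{D}_2$ be distributions on $(0,\infty)$ with $\mathrm{EMD}(\mathbb{D}_1,\mathbb{D}_2)\le\Delta$. Then for every $\theta\in\mathbb{R}^+$, $$\mathbb{E}_{y\sim\mathbb{D}_1}[g(\theta+\epsilon,y)]\le(1+\epsilon)\left(1+\frac{\Delta}{\epsilon^2}\right)\mathbb{E}_{y\sim\mathbb{D}_2}[g(\theta,y)].$$
   Context: For threshold $\theta\ge0$ and season length $y>0$: $g(\theta,y)=\frac{1+\theta}{\min\{1,y\}}$ if $y\ge\theta$ and $g(\theta,y)=\frac{y}{\min\{1,y\}}$ otherwise (the competitive ratio of the ski-rental strategy that rents, at cost $1$ per unit time, until time $\theta$ and then buys at cost $1$). Earth mover distance: for distributions $\mathbb{X},\mathbb{Y}$ on $\mathbb{R}$, $\mathrm{EMD}(\mathbb{X},\mathbb{Y})=\min\mathbb{E}_{(u,v)\sim\mathbb{J}}|u-v|$ over all couplings $\mathbb{J}$ with marginals $\mathbb{X},\mathbb{Y}$. *)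

From mathcomp Require Import all_boot all_order all_algebra.
From mathcomp Require Import all_classical all_reals all_analysis.
Set Implicit Arguments. Unset Strict Implicit. Unset Printing Implicit Defensive.
Import Order.TTheory GRing.Theory Num.Theory.
Local Open Scope classical_set_scope.
Local Open Scope ring_scope.

(* competitive ratio of the ski-rental strategy with threshold theta, season y *)
Definition g {R : realType} (theta y : R) : R :=
  if theta <= y then (1 + theta) / Num.min 1 y else y / Num.min 1 y.

Definition supported_pos {R : realType} (D : probability R R) : Prop :=
  D [set y : R | (0 < y)%R] = 1%E.

Definition is_coupling {R : realType} (X Y : probability R R)
  (J : probability (R * R)%type R) : Prop :=
  (forall A : set R, measurable A -> J (fst @^-1` A) = X A) /\
  (forall A : set R, measurable A -> J (snd @^-1` A) = Y A).

Definition EMD {R : realType} (X Y : probability R R) : \bar R :=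
  ereal_inf [set c | exists J : probability (R * R)%type R,
     is_coupling X Y J /\ c = (\int[J]_(p in setT) (`|p.1 - p.2|)%:E)%E].

(* For u, v > 0 and 0 < e <= 1 one has pointwise
     g (t + e) u <= (1 + e) * (g t v + |u - v| / e^2).
   Raising the threshold by e costs at most a factor 1 + e when u and v fall on
   the same side of it, and the only way for u and v to fall on different sides
   in the bad direction (v < t, t + e <= u) forces |u - v| >= e, which pays for
   the jump of the ratio.  Integrating against a coupling of D1 and D2 gives
   E_D1[g (t + e)] <= (1 + e) E_D2[g t] + (1 + e)/e^2 * E_J|u - v|; taking the
   infimum over couplings replaces the last expectation by Delta, and
   E_D2[g t] >= 1 turns the additive error into a multiplicative one. *)

From mathcomp Require Import all_boot all_order all_algebra.
From mathcomp Require Import all_classical all_reals all_analysis.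
From mathcomp Require Import ring lra measurable_realfun.
Set Implicit Arguments. Unset Strict Implicit. Unset Printing Implicit Defensive.
Import Order.TTheory GRing.Theory Num.Theory.
Local Open Scope classical_set_scope.
Local Open Scope ring_scope.

Section SkiRentalRatio.
Variable R : realType.
Implicit Types t e u v y : R.

Lemma g_lt t y : 0 < y -> y < t -> g t y = Num.max 1 y.
Proof.
move=> y0 yt; rewrite /g leNgt yt /= minEle maxEle.
by case: leP => _; rewrite ?divr1 ?divff ?gt_eqF.
Qed.

Lemma g_ge t y : t <= y -> g t y = (1 + t) / Num.min 1 y.
Proof. by move=> ty; rewrite /g ty. Qed.

Lemma le_1Dt_g t y : 0 <= t -> 0 < y -> t <= y -> 1 + t <= g t y.
Proof.
move=> t0 y0 ty; rewrite g_ge // minEle.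
have [y1|y1] := leP 1 y; rewrite ?divr1 // ler_pdivlMr //; nra.
Qed.

Lemma g_ge1 t y : 0 <= t -> 0 < y -> 1 <= g t y.
Proof.
move=> t0 y0; have [ty|yt] := leP t y.
- by apply: (le_trans _ (le_1Dt_g t0 y0 ty)); rewrite lerDl.
- by rewrite g_lt // le_max lexx.
Qed.

Lemma g_shift_le_below t e u v : 0 <= t -> e <= 1 -> 0 < u -> 0 < v ->
  u < t + e -> g (t + e) u <= g t v + `|u - v|.
Proof.
move=> t0 e1 u0 v0 ute; rewrite g_lt //.
have n0 := normr_ge0 (u - v); rewrite ge_max; apply/andP.
have [tv|vt] := leP t v; first by have := le_1Dt_g t0 v0 tv; split; lra.
have := ler_norm (u - v); rewrite g_lt //.
have : 1 <= Num.max 1 v by rewrite le_max lexx.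
have : v <= Num.max 1 v by rewrite le_max lexx orbT.
by split; lra.
Qed.

Lemma div_min1_le_add_dist t e u v : 0 <= t -> 0 < e -> e <= 1 -> 0 < v ->
  t + e <= u -> (1 + t) / Num.min 1 u <= (1 + t) / Num.min 1 v + `|u - v| / e ^+ 2.
Proof.
move=> t0 e0 e1 v0 teu; have u0 : 0 < u by lra.
set a := Num.min 1 u; set b := Num.min 1 v.
have a0 : 0 < a by rewrite lt_min ltr01.
have b0 : 0 < b by rewrite lt_min ltr01.
have [ba|ab] := leP b a.
  apply: ler_wpDr; first by rewrite divr_ge0 // exprn_ge0 // ltW.
  by apply: ler_wpM2l; rewrite ?addr_ge0 // lef_pV2 ?posrE.
have u1 : u < 1.
  by rewrite ltNge; apply: contraTN ab => /min_idPl; rewrite /a => ->; rewrite -leNgt ge_min lexx.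
have aE : a = u by apply/min_idPr/ltW.
have bv : b <= v by rewrite /b ge_min lexx orbT.
have key : (1 + t) * e ^+ 2 <= u * b.
  have te : t * e ^+ 2 <= t * e by rewrite expr2 mulrA ler_piMr // mulr_ge0 // ltW.
  have uu : (t + e) * (t + e) <= u * u by apply: ler_pM; lra.
  have ub : u * u <= u * b by rewrite ler_pM2l // -aE ltW.
  rewrite expr2 in te *; nra.
rewrite aE distrC ger0_norm; last by lra.
have -> : (1 + t) / u = (1 + t) / b + (1 + t) * (b - u) / (u * b).
  by field; rewrite !gt_eqF.
rewrite lerD2l ler_pdivrMr ?mulr_gt0 // mulrAC ler_pdivlMr ?exprn_gt0 //.
have bu : 0 <= b - u by rewrite subr_ge0 -aE ltW.
have := ler_wpM2l bu key.
have := ler_wpM2r (ltW (mulr_gt0 u0 b0)) (lerB bv (lexx u)).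
nra.
Qed.

Lemma g_shift_le_above t e u v : 0 <= t -> 0 < e -> e <= 1 -> 0 < v ->
  t + e <= u -> t <= v -> g (t + e) u <= (1 + e) * (g t v + `|u - v| / e ^+ 2).
Proof.
move=> t0 e0 e1 v0 teu tv; have a0 : 0 < Num.min 1 u by rewrite lt_min ltr01; lra.
rewrite !g_ge //; apply: le_trans (_ : (1 + e) * ((1 + t) / Num.min 1 u) <= _).
  by rewrite mulrA; apply: ler_wpM2r; [rewrite invr_ge0 ltW | nra].
by apply: ler_wpM2l; [lra | exact: div_min1_le_add_dist].
Qed.

Lemma g_shift_le_jump t e u v : 0 <= t -> 0 < e -> e <= 1 -> 0 < v ->
  t + e <= u -> v < t -> g (t + e) u <= (1 + e) * (g t v + `|u - v| / e ^+ 2).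
Proof.
move=> t0 e0 e1 v0 teu vt; have u0 : 0 < u by lra.
rewrite g_ge // g_lt // ger0_norm; last by lra.
set m := Num.max 1 v; set D := (u - v) / e ^+ 2.
have m1 : 1 <= m by rewrite le_max lexx.
have vm : v <= m by rewrite le_max lexx orbT.
have eD : e * (e * D) = u - v by rewrite mulrA -expr2 mulrC divfK // expf_neq0 // gt_eqF.
have D0 : 0 <= D by apply: divr_ge0; [lra | exact: exprn_ge0 (ltW e0)].
have eD1 : 1 <= e * D by nra.
have De : u - v <= D by nra.
have em : 0 <= e * m by rewrite mulr_ge0 ?ltW //; lra.
rewrite minEle; have [u1|u1] := leP 1 u; first by rewrite divr1; nra.
have um : u <= m * u by rewrite ler_peMl // ltW.
have uD : e * D <= D * u by rewrite [D * u]mulrC; apply: ler_wpM2r => //; lra.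
have emu : 0 <= e * (m + D) * u by rewrite !mulr_ge0 ?ltW //; lra.
rewrite ler_pdivrMr //; nra.
Qed.

Lemma g_shift_le t e u v : 0 <= t -> 0 < e -> e <= 1 -> 0 < u -> 0 < v ->
  g (t + e) u <= (1 + e) * (g t v + `|u - v| / e ^+ 2).
Proof.
move=> t0 e0 e1 u0 v0; have [ute|teu] := ltP u (t + e); last first.
  by have [tv|vt] := leP t v; [exact: g_shift_le_above | exact: g_shift_le_jump].
apply: (le_trans (g_shift_le_below t0 e1 u0 v0 ute)).
have g1 := g_ge1 t0 v0; have n0 := normr_ge0 (u - v).
have : `|u - v| <= `|u - v| / e ^+ 2.
  rewrite ler_pdivlMr ?exprn_gt0 // ler_piMr //; nra.
nra.
Qed.

End SkiRentalRatio.

Lemma measurable_inv (R : realType) : measurable_fun setT (@GRing.inv R).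
Proof.
rewrite -(setvU [set 0]); apply/measurable_funU => //; first exact: measurableC.
split; last exact: measurable_fun_set1.
apply: open_continuous_measurable_fun.
  by rewrite openC; apply/accessible_closed_set1/hausdorff_accessible/Rhausdorff.
by move=> x; rewrite inE /= => /eqP x0; exact: inv_continuous.
Qed.

Lemma measurable_g (R : realType) (t : R) : measurable_fun setT (g t).
Proof.
have minv : measurable_fun setT (fun y : R => (Num.min 1 y)^-1).
  by apply: (measurableT_comp (@measurable_inv R)); apply: measurable_minr.
apply: measurable_fun_ifT.
- exact: measurable_fun_ler.
- exact: measurable_funM.
- exact: measurable_funM.
Qed.

Lemma ge0_integral_preimage d1 d2 (T1 : measurableType d1) (T2 : measurableType d2)
    (R : realType) (phi : T1 -> T2) (mu : measure T1 R) (nu : measure T2 R)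
    (A : set T2) (f : T2 -> \bar R) :
  measurable_fun setT phi ->
  (forall B, measurable B -> mu (phi @^-1` B) = nu B) ->
  measurable A -> measurable_fun A f -> (forall y, A y -> (0 <= f y)%E) ->
  (\int[nu]_(y in A) f y = \int[mu]_(x in phi @^-1` A) f (phi x))%E.
Proof.
move=> mphi munu mA mf f0.
rewrite -(ge0_integral_pushforward mphi) //; last by move=> y; rewrite inE; exact: f0.
by apply: eq_measure_integral => B mB _; rewrite -munu.
Qed.

Section PositiveHalfLine.
Variable R : realType.
Local Notation pos := [set y : R | 0 < y].

Lemma measurable_preimage_fst (A : set R) :
  measurable A -> measurable (fst @^-1` A : set (R * R)).
Proof. by move=> mA; rewrite -[X in measurable X]setTI; exact: measurable_fst. Qed.

Lemma measurable_preimage_snd (A : set R) :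
  measurable A -> measurable (snd @^-1` A : set (R * R)).
Proof. by move=> mA; rewrite -[X in measurable X]setTI; exact: measurable_snd. Qed.


Lemma measurable_pos : measurable pos.
Proof.
rewrite (_ : pos = `]0, +oo[%classic); first exact: measurable_itv.
by apply/seteqP; split => x /=; rewrite in_itv /= andbT.
Qed.

Local Notation quadrant := (fst @^-1` pos `&` snd @^-1` pos : set (R * R)).

Lemma measurable_quadrant : measurable quadrant.
Proof.
by apply: measurableI; [exact: measurable_preimage_fst measurable_pos |
                        exact: measurable_preimage_snd measurable_pos].
Qed.

Lemma measurable_gE (t : R) : measurable_fun setT (fun y => (g t y)%:E).
Proof. by apply/measurable_EFinP; exact: measurable_g. Qed.

Lemma measurable_gE_fst (t : R) : measurable_fun setT (fun p : R * R => (g t p.1)%:E).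
Proof. exact: measurableT_comp (measurable_gE t) measurable_fst. Qed.

Lemma measurable_gE_snd (t : R) : measurable_fun setT (fun p : R * R => (g t p.2)%:E).
Proof. exact: measurableT_comp (measurable_gE t) measurable_snd. Qed.

Lemma measurable_dist : measurable_fun setT (fun p : R * R => `|p.1 - p.2|).
Proof. exact: measurableT_comp (@normr_measurable R setT) (measurable_funB _ _). Qed.

Lemma gE_ge0 (t y : R) : 0 <= t -> 0 < y -> (0 <= (g t y)%:E)%E.
Proof. by move=> t0 y0; rewrite lee_fin (le_trans ler01 (g_ge1 t0 y0)). Qed.

Lemma integral_g_ge1 (Y : probability R R) (t : R) :
  0 <= t -> supported_pos Y -> (1 <= \int[Y]_(y in pos) (g t y)%:E)%E.
Proof.
move=> t0 Ypos; rewrite -[X in (X <= _)%E]Ypos -[Y _]mul1e -integral_cst; last exact: measurable_pos.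
apply: ge0_le_integral => //.
- exact: measurable_pos.
- exact: measurable_funTS (measurable_gE t).
- by move=> y y0; rewrite lee_fin g_ge1.
Qed.

Section Coupling.
Variables (X Y : probability R R) (J : probability (R * R)%type R).
Hypothesis XYJ : is_coupling X Y J.

Lemma coupling_integral_fst (A : set R) (f : R -> \bar R) :
  measurable A -> measurable_fun A f -> (forall y, A y -> (0 <= f y)%E) ->
  (\int[X]_(y in A) f y = \int[J]_(p in fst @^-1` A) f p.1)%E.
Proof. exact: ge0_integral_preimage measurable_fst XYJ.1. Qed.

Lemma coupling_integral_snd (A : set R) (f : R -> \bar R) :
  measurable A -> measurable_fun A f -> (forall y, A y -> (0 <= f y)%E) ->
  (\int[Y]_(y in A) f y = \int[J]_(p in snd @^-1` A) f p.2)%E.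
Proof. exact: ge0_integral_preimage measurable_snd XYJ.2. Qed.

Lemma coupling_integral_setI_snd (D : set (R * R)) (B : set R) (F : R * R -> \bar R) :
  measurable D -> measurable B -> Y B = 1%E ->
  measurable_fun D F -> (forall p, D p -> (0 <= F p)%E) ->
  (\int[J]_(p in D) F p = \int[J]_(p in D `&` snd @^-1` B) F p)%E.
Proof.
move=> mD mB YB mF F0.
have mN : measurable (snd @^-1` (~` B) : set (R * R)).
  by apply: measurable_preimage_snd; exact: measurableC.
rewrite (ge0_negligible_integral mN mD) //; first by rewrite setDE preimage_setC setCK.
by rewrite [LHS](proj2 XYJ) ?probability_setC ?YB ?subee //; exact: measurableC.
Qed.

Lemma coupling_integral_shift_le (eps theta : R) :
  0 < eps -> eps <= 1 -> 0 <= theta -> Y pos = 1%E ->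
  (\int[X]_(y in pos) (g (theta + eps) y)%:E <=
   \int[J]_(p in quadrant)
     (((1 + eps) * g theta p.2)%:E + ((1 + eps) / eps ^+ 2 * `|p.1 - p.2|)%:E))%E.
Proof.
move=> e0 e1 th0 Ypos; have te0 : 0 <= theta + eps by rewrite addr_ge0 // ltW.
rewrite (coupling_integral_fst measurable_pos) //; first last.
- by move=> y y0; exact: gE_ge0.
- exact: measurable_funTS (measurable_gE _).
rewrite (coupling_integral_setI_snd (measurable_preimage_fst measurable_pos) measurable_pos) //;
  first last.
- by move=> p p0; exact: gE_ge0.
- exact: measurable_funTS (measurable_gE_fst _).
apply: ge0_le_integral => //.
- exact: measurable_quadrant.
- by move=> p [p1 _]; exact: gE_ge0.
- exact: measurable_funTS (measurable_gE_fst _).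
- apply: measurable_funTS; apply/measurable_EFinP; apply: measurable_funD.
    by apply: measurable_funM => //; exact: measurableT_comp (measurable_g theta) _.
  by apply: measurable_funM => //; exact: measurable_dist.
- move=> p [/= p1 p2]; rewrite lee_fin mulrAC -mulrA -mulrDr.
  exact: g_shift_le.
Qed.

Lemma coupling_integral_split_le (eps theta : R) :
  0 < eps -> 0 <= theta ->
  (\int[J]_(p in quadrant)
     (((1 + eps) * g theta p.2)%:E + ((1 + eps) / eps ^+ 2 * `|p.1 - p.2|)%:E) <=
   (1 + eps)%:E * \int[Y]_(y in pos) (g theta y)%:E +
   ((1 + eps) / eps ^+ 2)%:E * \int[J]_(p in setT) `|p.1 - p.2|%:E)%E.
Proof.
move=> e0 th0; set c := (1 + eps) / eps ^+ 2.
have c0 : 0 <= c by rewrite divr_ge0 ?exprn_ge0 ?addr_ge0 ?ltW.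
have e10 : (0 <= (1 + eps)%:E)%E by rewrite lee_fin addr_ge0 // ltW.
have mQ := measurable_quadrant; have mdist := measurable_dist.
rewrite ge0_integralD //; first last.
- by apply: measurable_funTS; apply/measurable_EFinP; exact: measurable_funM.
- by move=> p _; rewrite lee_fin mulr_ge0.
- apply: measurable_funTS; apply/measurable_EFinP; apply: measurable_funM => //.
  exact: measurableT_comp (measurable_g theta) _.
- by move=> p [_ p2]; rewrite EFinM mule_ge0 ?gE_ge0.
under eq_integral do rewrite EFinM; under [X in (_ + X <= _)%E]eq_integral do rewrite EFinM.
rewrite !ge0_integralZl //; first last.
- by move=> p [_ p2]; exact: gE_ge0.
- exact: measurable_funTS (measurable_gE_snd _).
- by apply: measurable_funTS; exact/measurable_EFinP.
apply: leeD; apply: lee_wpmul2l => //.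
- rewrite (coupling_integral_snd measurable_pos) //; first last.
  + by move=> y y0; exact: gE_ge0.
  + exact: measurable_funTS (measurable_gE _).
  apply: ge0_subset_integral => //; last by move=> p /= p2; exact: gE_ge0.
  - exact: measurable_preimage_snd measurable_pos.
  - exact: measurable_funTS (measurable_gE_snd _).
- by apply: ge0_subset_integral => //; exact/measurable_EFinP.
Qed.

Lemma coupling_shift_bound (eps theta : R) :
  0 < eps -> eps <= 1 -> 0 <= theta -> Y pos = 1%E ->
  (\int[X]_(y in pos) (g (theta + eps) y)%:E <=
   (1 + eps)%:E * \int[Y]_(y in pos) (g theta y)%:E +
   ((1 + eps) / eps ^+ 2)%:E * \int[J]_(p in setT) `|p.1 - p.2|%:E)%E.
Proof.
move=> e0 e1 th0 Ypos.
exact: le_trans (coupling_integral_shift_le e0 e1 th0 Ypos) (coupling_integral_split_le e0 th0).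
Qed.

End Coupling.

End PositiveHalfLine.

Lemma le_EMD_bound (R : realType) (X Y : probability R R) (L A : \bar R) (k Delta : R) :
  0 < k -> (EMD X Y <= Delta%:E)%E ->
  (forall J, is_coupling X Y J -> L <= A + k%:E * \int[J]_(p in setT) `|p.1 - p.2|%:E)%E ->
  (L <= A + (k * Delta)%:E)%E.
Proof.
move=> k0 XY LJ; apply/lee_addgt0Pr => d d0.
have : (EMD X Y < (Delta + d / k)%:E)%E.
  by apply: le_lt_trans XY _; rewrite lte_fin ltrDl divr_gt0.
case/ereal_inf_lt => _ [J [XYJ ->]] costJ.
apply: (le_trans (LJ J XYJ)); rewrite -addeA -EFinD; apply: leeD2l.
have -> : k * Delta + d = k * (Delta + d / k) by field; rewrite gt_eqF.
by rewrite EFinM; apply: lee_wpmul2l; [rewrite lee_fin ltW | exact: ltW].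
Qed.

Theorem mainTheorem6 (R : realType) (eps Delta : R) (D1 D2 : probability R R)
  (heps0 : 0 < eps) (heps1 : eps <= 1 / 100) (hDelta : 0 <= Delta)
  (hD1 : supported_pos D1) (hD2 : supported_pos D2)
  (hEMD : (EMD D1 D2 <= Delta%:E)%E) :
  forall theta : R, 0 <= theta ->
  (\int[D1]_(y in [set y : R | (0 < y)%R]) (g (theta + eps) y)%:E <=
   ((1 + eps) * (1 + Delta / eps ^+ 2))%:E *
     \int[D2]_(y in [set y : R | (0 < y)%R]) (g theta y)%:E)%E.
Proof.
move=> theta theta0; have eps1 : eps <= 1 by apply: le_trans heps1 _; lra.
have k0 : 0 < (1 + eps) / eps ^+ 2 by rewrite divr_gt0 ?exprn_gt0 // addr_gt0.
apply: le_trans (le_EMD_bound k0 hEMD (fun J XYJ => coupling_shift_bound XYJ heps0 eps1 theta0 hD2)) _.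
have kD0 : 0 <= (1 + eps) / eps ^+ 2 * Delta by rewrite mulr_ge0 // ltW.
set E2 := (\int[D2]_(y in _) _)%E.
have -> : (((1 + eps) * (1 + Delta / eps ^+ 2))%:E * E2 =
    (1 + eps)%:E * E2 + ((1 + eps) / eps ^+ 2 * Delta)%:E * E2)%E.
  by rewrite -ge0_muleDl ?lee_fin ?addr_ge0 ?(ltW heps0) // -EFinD mulrDr mulr1 mulrAC -mulrA.
by rewrite leeD2l // lee_pemulr ?lee_fin // integral_g_ge1.
Qed.
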